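(* Let $\{X_t\}_{t\ge0}$ be a continuous-time Markov chain with finite state space $S=\{1,\dots,N\}$ and infinitesimal generator $Q=(q_{ij})$ with $q_{ij}>0$ for all $i\ne j$ and $q_{ii}=-\sum_{j\ne i}q_{ij}$. Then the chain is in equilibrium (i.e. reversible, equivalently there is a probability distribution $\pi$ on $S$ with $\pi_i q_{ij}=\pi_j q_{ji}$ for all $i\ne j$) if and only if for every triple $(i,i+1,i+1+j)$ with $1\le i\le N-2$ and $1\le j\le N-(i+1)$ the determinant $$\Delta_{(i,i+1,i+1+j)}:=\begin{vmatrix} q_{i,i+1} & -q_{i+1,i} & 0\\ q_{i,i+1+j} & 0 & -q_{i+1+j,i}\\ 0 & q_{i+1,i+1+j} & -q_{i+1+j,i+1}\end{vmatrix}$$ equals zero.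
   Context: The chain (started from a distribution $\pi$) is said to be in equilibrium if for all $n$, all $x_0,\dots,x_n\in S$ and all $0\le t_0<t_1<\dots<t_n$, $\mathbb{P}(X_{t_0}=x_0,\dots,X_{t_n}=x_n)=\mathbb{P}(X_{t_0}=x_n,\dots,X_{t_n}=x_0)$; this is equivalent to the detailed balance condition $\pi_i q_{ij}=\pi_j q_{ji}$ for all $i\ne j$, where $\pi$ is an invariant distribution ($\pi Q=0$). *)

(* States S = {1,...,N} are represented by 'I_N (0-based). *)
From mathcomp Require Import all_boot all_order all_algebra.
From mathcomp Require Import reals.
Set Implicit Arguments. Unset Strict Implicit. Unset Printing Implicit Defensive.
Import Order.TTheory GRing.Theory Num.Theory.
Local Open Scope ring_scope.

Definition positive_generator (R : realType) (N : nat) (Q : 'M[R]_N) : Prop :=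
  (forall i j : 'I_N, i != j -> 0 < Q i j) /\
  (forall i : 'I_N, Q i i = - \sum_(j < N | j != i) Q i j).

Definition prob_distr (R : realType) (N : nat) (pi : 'rV[R]_N) : Prop :=
  (forall i : 'I_N, 0 <= pi 0 i) /\ \sum_(i < N) pi 0 i = 1.

Definition in_equilibrium (R : realType) (N : nat) (Q : 'M[R]_N) : Prop :=
  exists pi : 'rV[R]_N,
    prob_distr pi /\ pi *m Q = 0 /\
    (forall i j : 'I_N, i != j -> pi 0 i * Q i j = pi 0 j * Q j i).

Definition mx3 (R : realType) (a b c d e f g h k : R) : 'M[R]_3 :=
  \matrix_(r < 3, s < 3)
     nth 0 (nth [::] [:: [:: a; b; c]; [:: d; e; f]; [:: g; h; k]] r) s.

Definition Delta (R : realType) (N : nat) (Q : 'M[R]_N) (x y z : 'I_N) : R :=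
  \det (mx3 (Q x y) (- Q y x) 0
            (Q x z) 0 (- Q z x)
            0 (Q y z) (- Q z y)).

(* Expanding the determinant, Delta_(x,y,z) = 0 is Kolmogorov's cycle
   condition q_xy q_yz q_zx = q_xz q_zy q_yx on the triangle x, y, z.
   Detailed balance gives it on every triangle, since with positive rates a
   balanced distribution vanishing at one state vanishes everywhere.
   Conversely, the weights w_k = prod_(i<k) q_(i,i+1) / q_(i+1,i) balance
   every adjacent pair k, k+1 by construction, and the cycle condition on
   the triangle (i, i+1, j) propagates balance from the pairs (i, i+1) and
   (i+1, j) to (i, j); induction on j - i then balances every pair, and
   normalising w gives the reversible distribution. *)
From mathcomp Require Import all_boot all_order all_algebra.
From mathcomp Require Import reals ring zify.
Set Implicit Arguments. Unset Strict Implicit. Unset Printing Implicit Defensive.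
Import Order.TTheory GRing.Theory Num.Theory.
Local Open Scope ring_scope.

Lemma DeltaE (R : realType) N (Q : 'M[R]_N) x y z :
  Delta Q x y z = Q x y * Q y z * Q z x - Q x z * Q z y * Q y x.
Proof.
rewrite /Delta (expand_det_row _ ord0) !big_ord_recr big_ord0 /=.
rewrite /cofactor !(expand_det_row _ ord0) !big_ord_recr !big_ord0 /=.
by rewrite /cofactor !det_mx11 /mx3 !mxE /=; ring.
Qed.

Section BalanceAlgebra.
Variable R : idomainType.

Lemma balance_cycle3 (pa pb pc qab qba qbc qcb qca qac : R) :
  pa != 0 -> pa * qab = pb * qba -> pb * qbc = pc * qcb ->
  pc * qca = pa * qac ->
  qab * qbc * qca = qac * qcb * qba.
Proof.
move=> pa_neq0 Eab Ebc Eca; apply/subr0_eq/(mulIf pa_neq0); rewrite mul0r.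
have -> : (qab * qbc * qca - qac * qcb * qba) * pa =
  qbc * qca * (pa * qab - pb * qba) + qba * qca * (pb * qbc - pc * qcb)
  + qba * qcb * (pc * qca - pa * qac) by ring.
by rewrite Eab Ebc Eca !subrr !mulr0 !addr0.
Qed.

Lemma cycle3_balance (pa pb pc qab qba qbc qcb qca qac : R) :
  qba != 0 -> qcb != 0 -> pa * qab = pb * qba -> pb * qbc = pc * qcb ->
  qab * qbc * qca = qac * qcb * qba ->
  pa * qac = pc * qca.
Proof.
move=> qba_neq0 qcb_neq0 Eab Ebc Ecycle.
apply/subr0_eq/(mulIf (mulf_neq0 qcb_neq0 qba_neq0)); rewrite mul0r.
have -> : (pa * qac - pc * qca) * (qcb * qba) =
  - pa * (qab * qbc * qca - qac * qcb * qba)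
  + qbc * qca * (pa * qab - pb * qba) + qba * qca * (pb * qbc - pc * qcb)
  by ring.
by rewrite Eab Ebc Ecycle !subrr !mulr0 !addr0.
Qed.

End BalanceAlgebra.

Section DetailedBalance.
Variables (R : numFieldType) (N : nat) (Q : 'M[R]_N).

Definition detailed_balance (w : 'I_N -> R) :=
  forall i j : 'I_N, i != j -> w i * Q i j = w j * Q j i.

Lemma detailed_balance_mulmx (pi : 'rV[R]_N) :
  (forall i, \sum_j Q i j = 0) -> detailed_balance (pi 0) -> pi *m Q = 0.
Proof.
move=> Q_row0 pi_bal; apply/rowP => j; rewrite !mxE.
rewrite (eq_bigr (fun i => pi 0 j * Q j i)) => [|i _].
  by rewrite -mulr_sumr Q_row0 mulr0.
by case: (eqVneq i j) => [->|/pi_bal].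
Qed.

Hypothesis Q_offdiag_gt0 : forall i j : 'I_N, i != j -> 0 < Q i j.

Lemma detailed_balance_eq0 (w : 'I_N -> R) a :
  detailed_balance w -> w a = 0 -> forall i, w i = 0.
Proof.
move=> w_bal wa0 i; case: (eqVneq i a) => [-> //|ia].
move: (w_bal i a ia); rewrite wa0 mul0r => /eqP.
by rewrite mulf_eq0 (gt_eqF (Q_offdiag_gt0 ia)) orbF => /eqP.
Qed.

End DetailedBalance.

Lemma positive_generator_row0 (R : realType) N (Q : 'M[R]_N) :
  positive_generator Q -> forall i, \sum_j Q i j = 0.
Proof. by move=> [_ Q_diag] i; rewrite (bigD1 i) //= Q_diag addNr. Qed.

Lemma equilibrium_cycle3 (R : realType) N (Q : 'M[R]_N) :
  positive_generator Q -> in_equilibrium Q ->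
  forall a b c : 'I_N, a != b -> b != c -> c != a ->
  Q a b * Q b c * Q c a = Q a c * Q c b * Q b a.
Proof.
move=> [Q_gt0 _] [pi [[_ pi_sum1] [_ pi_bal]]] a b c ab bc ca.
apply: (balance_cycle3 _ (pi_bal _ _ ab) (pi_bal _ _ bc) (pi_bal _ _ ca)).
apply: contra_eq_neq pi_sum1 => /(detailed_balance_eq0 Q_gt0 pi_bal) pi0.
by rewrite big1 // eq_sym oner_neq0.
Qed.

Lemma balanced_weights_equilibrium (R : realType) N (Q : 'M[R]_N)
    (w : 'I_N -> R) :
  (forall i, \sum_j Q i j = 0) -> (forall i, 0 <= w i) -> 0 < \sum_i w i ->
  detailed_balance Q w -> in_equilibrium Q.
Proof.
move=> Q_row0 w_ge0 sum_gt0 w_bal.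
pose pi := \row_j (w j / \sum_i w i).
have pi_bal : detailed_balance Q (pi 0).
  by move=> i j ij; rewrite !mxE mulrAC w_bal // mulrAC.
exists pi; split; [split|split] => //.
- by move=> i; rewrite mxE divr_ge0 // ltW.
- by under eq_bigr do rewrite mxE; rewrite -mulr_suml divff ?gt_eqF.
- exact: detailed_balance_mulmx.
Qed.

Section BalanceWeights.
Variables (R : numFieldType) (n : nat) (Q : 'M[R]_n.+1).
Hypothesis Q_offdiag_gt0 : forall i j : 'I_n.+1, i != j -> 0 < Q i j.
Hypothesis Q_cycle3 : forall a b c : 'I_n.+1,
  val b = (val a).+1 -> (val b < val c)%N ->
  Q a b * Q b c * Q c a = Q a c * Q c b * Q b a.

Local Notation q i j := (Q (inord i) (inord j)).

Definition balance_weight (k : nat) : R := \prod_(i < k) (q i i.+1 / q i.+1 i).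

Local Notation w := balance_weight.

Lemma inord_rate_gt0 (i j : nat) :
  (i <= n)%N -> (j <= n)%N -> i != j -> 0 < q i j.
Proof.
move=> i_le j_le ij; apply: Q_offdiag_gt0; apply: contra ij.
by move=> /eqP/(congr1 val); rewrite /= !inordK // => ->.
Qed.

Lemma balance_weight_gt0 k : (k <= n)%N -> 0 < w k.
Proof.
move=> k_le; apply: prodr_gt0 => i _.
by apply: divr_gt0; apply: inord_rate_gt0; have := ltn_ord i; lia.
Qed.

Lemma balance_weight_adjacent i :
  (i < n)%N -> w i * q i i.+1 = w i.+1 * q i.+1 i.
Proof.
move=> i_lt; rewrite /w big_ord_recr /= -mulrA mulfVK //.
by rewrite gt_eqF // inord_rate_gt0 //; lia.
Qed.

Lemma balance_weight_gap d i : (i + d.+1 <= n)%N ->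
  w i * q i (i + d.+1) = w (i + d.+1) * q (i + d.+1) i.
Proof.
elim: d i => [|d IHd] i le_n; first by rewrite addn1 balance_weight_adjacent //; lia.
have := IHd i.+1; rewrite addSn -addnS => /(_ le_n) bal_next.
apply: (cycle3_balance _ _ (balance_weight_adjacent _) bal_next); try lia.
- by rewrite gt_eqF // inord_rate_gt0 //; lia.
- by rewrite gt_eqF // inord_rate_gt0 //; lia.
- by apply: Q_cycle3; rewrite /= !inordK //; lia.
Qed.

Lemma balance_weight_balanced :
  detailed_balance Q (fun j => w j).
Proof.
move=> i j /=; wlog ij : i j / (i < j)%N => [bal_lt|_].
  rewrite neq_ltn => /orP[ij|ji]; first by apply: bal_lt; rewrite // neq_ltn ij.
  by rewrite (bal_lt j i ji) // neq_ltn ji.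
have j_gap : nat_of_ord j = (i + (j - i).-1.+1)%N by lia.
have := @balance_weight_gap (j - i).-1 i; rewrite -j_gap !inord_val.
by apply; have := ltn_ord j; lia.
Qed.

Lemma balance_weight_sum_gt0 : 0 < \sum_(j < n.+1) w j.
Proof.
rewrite (bigD1 ord0) //= ltr_wpDr ?balance_weight_gt0 //.
by apply: sumr_ge0 => j _; rewrite ltW // balance_weight_gt0 // -ltnS.
Qed.

End BalanceWeights.

(* Triples (i, i+1, i+1+j), 1 <= i <= N-2, 1 <= j <= N-(i+1), are encoded
   0-based as (a, b, c) with val b = val a + 1 and val b < val c. *)
Theorem mainTheorem3 (R : realType) (N : nat) (hN : (0 < N)%N)
  (Q : 'M[R]_N) (hQ : positive_generator Q) :
  in_equilibrium Q <->
  (forall a b c : 'I_N,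
     nat_of_ord b = (nat_of_ord a).+1 -> (nat_of_ord b < nat_of_ord c)%N ->
     Delta Q a b c = 0).
Proof.
split=> [Q_eq a b c b_succ b_lt_c | Delta0].
  have ord_neq (u v : 'I_N) : nat_of_ord u != v -> u != v by [].
  rewrite DeltaE (equilibrium_cycle3 hQ Q_eq) ?subrr //; apply: ord_neq; lia.
case: N hN Q hQ Delta0 => // n _ Q hQ Delta0.
have Q_cycle3 (a b c : 'I_n.+1) : val b = (val a).+1 -> (val b < val c)%N ->
    Q a b * Q b c * Q c a = Q a c * Q c b * Q b a.
  by move=> b_succ b_lt_c; apply/subr0_eq; rewrite -DeltaE Delta0.
apply: (balanced_weights_equilibrium (positive_generator_row0 hQ) _
          (balance_weight_sum_gt0 hQ.1) (balance_weight_balanced hQ.1 Q_cycle3)).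
by move=> j; apply/ltW/(balance_weight_gt0 hQ.1); rewrite -ltnS.
Qed.
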